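(* In any execution of $\mathcal{U}$, for every operation $o$: if $h(o) = (t(o), x)$ for some $x$ at time $T$, and $h(o) = (t, y)$ for some $y$ with $t \neq t(o)$ at a time $T' > T$, then there is a time $T^* < T'$ at which $o$ is done.
   Context: Model: an asynchronous shared-memory system with possibly infinitely many processes, any of which may crash, communicating via atomic shared objects. A fetch-and-increment (F\&I) object stores an integer; F\&I$(C)$ atomically returns the current value and increments it. A generalized-compare-and-swap (GCAS) object $O$ stores a value and supports Read$(O)$ and GCAS$(c, O, v_1, v_2)$, which atomically does: if $c(\text{current value of } O, v_1)$ holds then set $O := v_2$ and return true, else return false. Tuples are compared componentwise for $=$; GCAS$(>, A, (t,-,-), v)$ succeeds iff the time field of $A$ is strictly greater than $t$. Implemented type $\mathcal{T} = (OP, RES, Q, \delta)$ with initial state $s_0$; a procedure $apply_{\mathcal{T}}(o,s)$ returns some $(s',r)$ with $(s,o,s',r)\in\delta$. $NULL$ is a value different from every response of $\mathcal{T}$, and $NOOP$ is a name different from every operation of $\mathcal{T}$. Algorithm $\mathcal{U}$: each process $p$ owns a GCAS object $H_p$ with fields $(time, response)$. Shared objects: F\&I object $C$, initially $1$; GCAS object $A$ with fields $(time, op, ptr)$, initially $(0, NOOP, h(NOOP))$, where $h(NOOP)$ is a pointer to an immutable location containing $(0,\perp)$; GCAS object $S$ with fields $(time, state, response, ptr)$, initially $(0, s_0, \perp, h(NOOP))$. Process $p$ performs operation $o$ by calling DoOp$(o)$: (1) DoOp$(o)$ invoked; (2) $t := $ F\&I$(C)$; (3) $H_p := (t, NULL)$;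 (4) while $H_p = (t, NULL)$ do: (5) $(t^*, s^*, r^*, roptr^* ) := S$; (6) GCAS$(=, *roptr^*, (t^*, NULL), (t^*, r^* ))$; (7) GCAS$(>, A, (t,-,-), (t, o, \&H_p))$; (8) $(t', o', roptr') := A$; (9) $(\hat t, \hat r) := *roptr'$; (10) if $(\hat t,\hat r) = (t', NULL)$ then (11) $(s', r') := apply_{\mathcal{T}}(o', s^* )$; (12) GCAS$(=, S, (t^*,s^*,r^*,roptr^* ), (t', s', r', roptr'))$; (13) else GCAS$(=, A, (t', o', roptr'), (t, o, \&H_p))$; end while; (14) return $H_p.response$. Notation: an ''operation'' $o$ means one invocation of DoOp$(o)$. $p(o)$ is the process executing it; $t(o)$ is the value returned by its F\&I at line 2, or $\infty$ if line 2 has not been executed; $h(o)$ is $H_{p(o)}$. For $NOOP$: $t(NOOP)=0$ and $h(NOOP)$ is the immutable location containing $(0,\perp)$. Operation $o$ is complete at time $T$ if $p(o)$ executed line 14 in DoOp$(o)$ at some time $\le T$. Operation $o$ is done at time $T$ if at some time $T'\le T$, $h(o) = (t(o), r)$ with $r \neq NULL$. *)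

(* Processes are indexed by nat (possibly infinitely many); a crashed
   process simply stops taking steps; executions may stutter forever
   (covering finite executions). *)
From Stdlib Require Import Arith.

Set Implicit Arguments.

(* pointers stored in A and S: h(NOOP) or &H_q *)
Inductive ptr := PNoop | PH (q : nat).

(* values of the response field of H_p / S:  NULL, bottom, or a response of T *)
Inductive resp (RES : Type) := RNull | RBot | RVal (r : RES).
Arguments RNull {RES}.
Arguments RBot {RES}.

Section Model.
Variables (OP RES Q : Type).

(* operation names in A: None = NOOP *)
Definition Aval := (nat * option OP * ptr)%type.          (* (time, op, ptr) *)
Definition Sval := (nat * Q * resp RES * ptr)%type.       (* (time, state, response, ptr) *)
Definition Hval := (nat * resp RES)%type.                 (* (time, response) *)

(* program counter of a process, together with its local variables;
   the label names the next line to be executed *)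
Inductive pcs :=
| Idle                                               (* not inside any DoOp: next is line 1 *)
| L2  (o : OP)
| L3  (o : OP) (t : nat)
| L4  (o : OP) (t : nat)
| L5  (o : OP) (t : nat)
| L6  (o : OP) (t : nat) (sv : Sval)
| L7  (o : OP) (t : nat) (sv : Sval)
| L8  (o : OP) (t : nat) (sv : Sval)
| L9  (o : OP) (t : nat) (sv : Sval) (av : Aval)     (* next: read *roptr', then local lines 10/11 *)
| L12 (o : OP) (t : nat) (sv : Sval) (av : Aval) (s' : Q) (r' : RES)
| L13 (o : OP) (t : nat) (av : Aval)
| L14 (o : OP) (t : nat).

Record config := mkConfig {
  fC   : nat;
  fA   : Aval;
  fS   : Sval;
  fH   : nat -> Hval;
  floc : nat -> pcs;
  fcnt : nat -> nat        (* number of DoOp calls of p already completed;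
                              the current/next call of p is its fcnt-th (0-based) *)
}.

Definition upd {T : Type} (f : nat -> T) (x : nat) (v : T) : nat -> T :=
  fun y => if Nat.eqb y x then v else f y.

Definition setC c n := mkConfig n (fA c) (fS c) (fH c) (floc c) (fcnt c).
Definition setA c a := mkConfig (fC c) a (fS c) (fH c) (floc c) (fcnt c).
Definition setS c s := mkConfig (fC c) (fA c) s (fH c) (floc c) (fcnt c).
Definition setH c q v := mkConfig (fC c) (fA c) (fS c) (upd (fH c) q v) (floc c) (fcnt c).
Definition setLoc c p l := mkConfig (fC c) (fA c) (fS c) (fH c) (upd (floc c) p l) (fcnt c).
Definition setCnt c p n := mkConfig (fC c) (fA c) (fS c) (fH c) (floc c) (upd (fcnt c) p n).

(* *ptr : h(NOOP) is an immutable location containing (0, bottom) *)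
Definition deref (c : config) (r : ptr) : Hval :=
  match r with PNoop => (0, RBot) | PH q => fH c q end.

Definition init (s0 : Q) : config :=
  mkConfig 1 (0, None, PNoop) (0, s0, RBot, PNoop)
           (fun _ => (0, RBot)) (fun _ => Idle) (fun _ => 0).

Inductive step (apply : OP -> Q -> Q * RES) (c : config) (p : nat) : config -> Prop :=
| st1 : forall o, floc c p = Idle ->
    step apply c p (setLoc c p (L2 o))
| st2 : forall o, floc c p = L2 o ->
    step apply c p (setLoc (setC c (S (fC c))) p (L3 o (fC c)))
| st3 : forall o t, floc c p = L3 o t ->
    step apply c p (setLoc (setH c p (t, RNull)) p (L4 o t))
| st4_loop : forall o t, floc c p = L4 o t -> fH c p = (t, RNull) ->
    step apply c p (setLoc c p (L5 o t))
| st4_exit : forall o t, floc c p = L4 o t -> fH c p <> (t, RNull) ->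
    step apply c p (setLoc c p (L14 o t))
| st5 : forall o t, floc c p = L5 o t ->
    step apply c p (setLoc c p (L6 o t (fS c)))
| st6_succ : forall o t ts ss rs q, floc c p = L6 o t (ts, ss, rs, PH q) ->
    fH c q = (ts, RNull) ->
    step apply c p (setLoc (setH c q (ts, rs)) p (L7 o t (ts, ss, rs, PH q)))
| st6_fail : forall o t ts ss rs rp, floc c p = L6 o t (ts, ss, rs, rp) ->
    deref c rp <> (ts, RNull) ->
    step apply c p (setLoc c p (L7 o t (ts, ss, rs, rp)))
| st7_succ : forall o t sv, floc c p = L7 o t sv ->
    fst (fst (fA c)) > t ->
    step apply c p (setLoc (setA c (t, Some o, PH p)) p (L8 o t sv))
| st7_fail : forall o t sv, floc c p = L7 o t sv ->
    ~ (fst (fst (fA c)) > t) ->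
    step apply c p (setLoc c p (L8 o t sv))
| st8 : forall o t sv, floc c p = L8 o t sv ->
    step apply c p (setLoc c p (L9 o t sv (fA c)))
| st9_then : forall o t ts ss rs rp t' o'' rp',
    floc c p = L9 o t (ts, ss, rs, rp) (t', Some o'', rp') ->
    deref c rp' = (t', RNull) ->
    step apply c p (setLoc c p (L12 o t (ts, ss, rs, rp) (t', Some o'', rp')
                                  (fst (apply o'' ss)) (snd (apply o'' ss))))
| st9_else : forall o t sv t' o' rp', floc c p = L9 o t sv (t', o', rp') ->
    deref c rp' <> (t', RNull) ->
    step apply c p (setLoc c p (L13 o t (t', o', rp')))
| st12_succ : forall o t sv t' o' rp' s' r',
    floc c p = L12 o t sv (t', o', rp') s' r' -> fS c = sv ->
    step apply c p (setLoc (setS c (t', s', RVal r', rp')) p (L4 o t))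
| st12_fail : forall o t sv av s' r', floc c p = L12 o t sv av s' r' -> fS c <> sv ->
    step apply c p (setLoc c p (L4 o t))
| st13_succ : forall o t av, floc c p = L13 o t av -> fA c = av ->
    step apply c p (setLoc (setA c (t, Some o, PH p)) p (L4 o t))
| st13_fail : forall o t av, floc c p = L13 o t av -> fA c <> av ->
    step apply c p (setLoc c p (L4 o t))
| st14 : forall o t, floc c p = L14 o t ->
    step apply c p (setLoc (setCnt c p (S (fcnt c p))) p Idle).

Definition execution (s0 : Q) (apply : OP -> Q -> Q * RES) (ex : nat -> config) : Prop :=
  ex 0 = init s0 /\
  forall i, ex (S i) = ex i \/ exists p, step apply (ex i) p (ex (S i)).

(* operation o = (p, k): the k-th (0-based) DoOp call of process p.
   t(o) = t0 iff o executes line 2 at some time i and F&I returns t0 *)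
Definition fai_returns (ex : nat -> config) (p k t0 : nat) : Prop :=
  exists i o, fcnt (ex i) p = k /\ floc (ex i) p = L2 o /\
              floc (ex (S i)) p = L3 o t0 /\ t0 = fC (ex i).

(* o = (p,k) with t(o) = t0 is done at time T *)
Definition done_at (ex : nat -> config) (p t0 T : nat) : Prop :=
  exists T'', T'' <= T /\ exists r, fH (ex T'') p = (t0, r) /\ r <> RNull.

End Model.

(* While p runs lines 4-13 of DoOp(o), the time field of H_p is t(o); before
   line 3 and after the loop exits, the response field of H_p is not NULL.
   Only p itself (at line 3) changes the time field of H_p: a helper's GCAS
   at line 6 keeps it.  Hence at the first moment after T at which the time
   field of H_p moves away from t(o), p is at line 3 of a later operation, so
   the response field is already non-NULL and o is done. *)
From Stdlib Require Import Arith Lia.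

Set Implicit Arguments.

Lemma first_exit (P : nat -> Prop) (P_dec : forall n, {P n} + {~ P n}) (T T' : nat) :
  T <= T' -> P T -> ~ P T' -> exists j, T <= j < T' /\ P j /\ ~ P (S j).
Proof.
  induction 1 as [|T' HTT' IH]; intros HT HT'; [contradiction|].
  destruct (P_dec T') as [HP|HnP].
  - exists T'; repeat split; auto.
  - destruct (IH HT HnP) as (j & Hj & Hjs); exists j; split; auto; lia.
Qed.

Section Slots.
Variables (OP RES Q : Type).

Definition loop_time (l : pcs OP RES Q) : option nat :=
  match l with
  | @Idle _ _ _ | @L2 _ _ _ _ | @L3 _ _ _ _ _ | @L14 _ _ _ _ _ => None
  | @L4 _ _ _ _ t | @L5 _ _ _ _ t | @L6 _ _ _ _ t _ | @L7 _ _ _ _ t _ | @L8 _ _ _ _ t _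
  | @L9 _ _ _ _ t _ _ | @L12 _ _ _ _ t _ _ _ _ | @L13 _ _ _ _ t _ => Some t
  end.

Definition slots_consistent (c : config OP RES Q) : Prop :=
  forall p, match loop_time (floc c p) with
            | None => snd (fH c p) <> RNull
            | Some t => fst (fH c p) = t
            end.

Lemma slots_consistent_init (s0 : Q) : slots_consistent (init OP RES s0).
Proof. intro p; simpl; discriminate. Qed.

(* The delicate case is a successful line-6 GCAS on H_q: it needs H_q to hold
   NULL, so q is inside its loop and the time field written back is its own. *)
Lemma slots_consistent_step apply c q c' :
  slots_consistent c -> step apply c q c' -> slots_consistent c'.
Proof.
  intros Hc Hs p'. pose proof (Hc p') as Hp.
  destruct Hs; unfold setLoc, setH, setC, setA, setS, setCnt, upd; simpl;
  destruct (Nat.eqb p' q) eqn:E;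
  try (apply Nat.eqb_eq in E; subst p'; rewrite H in Hp); simpl in *; auto.
  - destruct (fH c q) as [a b] eqn:Eh; simpl in *; subst a.
    destruct b; simpl; auto; discriminate.
  - destruct (Nat.eqb q q0) eqn:E2; simpl; auto.
    apply Nat.eqb_eq in E2; subst q0. rewrite H0 in Hp; simpl in Hp; auto.
  - destruct (Nat.eqb p' q0) eqn:E2; auto.
    apply Nat.eqb_eq in E2; subst q0. rewrite H0 in Hp.
    destruct (loop_time (floc c p')); simpl in *; auto.
Qed.

Lemma slot_time_change_done apply c q c' p :
  slots_consistent c -> step apply c q c' ->
  fst (fH c p) <> fst (fH c' p) -> snd (fH c p) <> RNull.
Proof.
  intros Hc Hs Hne. pose proof (Hc p) as Hp.
  destruct Hs; unfold setLoc, setH, setC, setA, setS, setCnt, upd in *; simpl in *;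
  try (exfalso; apply Hne; reflexivity).
  - destruct (Nat.eqb p q) eqn:E; [|exfalso; apply Hne; reflexivity].
    apply Nat.eqb_eq in E; subst. rewrite H in Hp. exact Hp.
  - destruct (Nat.eqb p q0) eqn:E; [|exfalso; apply Hne; reflexivity].
    apply Nat.eqb_eq in E; subst. rewrite H0 in Hne. simpl in Hne. congruence.
Qed.

Section Execution.
Variables (s0 : Q) (apply : OP -> Q -> Q * RES) (ex : nat -> config OP RES Q).
Hypothesis Hex : execution s0 apply ex.

Lemma execution_slots_consistent i : slots_consistent (ex i).
Proof.
  destruct Hex as [H0 Hst].
  induction i as [|i IH]; [rewrite H0; apply slots_consistent_init|].
  destruct (Hst i) as [E|[q Hq]]; [rewrite E; exact IH|].
  exact (slots_consistent_step IH Hq).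
Qed.

Lemma execution_slot_time_change_done i p :
  fst (fH (ex i) p) <> fst (fH (ex (S i)) p) -> snd (fH (ex i) p) <> RNull.
Proof.
  intro Hne. destruct Hex as [_ Hst].
  destruct (Hst i) as [E|[q Hq]]; [rewrite E in Hne; contradiction|].
  exact (slot_time_change_done p (execution_slots_consistent i) Hq Hne).
Qed.

End Execution.
End Slots.

Theorem mainTheorem5 :
  forall (OP RES Q : Type) (delta : Q -> OP -> Q -> RES -> Prop) (s0 : Q)
         (apply : OP -> Q -> Q * RES),
    (forall o s, delta s o (fst (apply o s)) (snd (apply o s))) ->
    forall ex : nat -> config OP RES Q,
    execution s0 apply ex ->
    forall (p k t0 : nat),
    fai_returns ex p k t0 ->
    forall (T T' t : nat) (x y : resp RES),
    fH (ex T) p = (t0, x) ->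
    fH (ex T') p = (t, y) ->
    t <> t0 ->
    T < T' ->
    exists Tstar, Tstar < T' /\ done_at ex p t0 Tstar.
Proof.
  intros OP RES Q delta s0 apply _ ex Hex p k t0 _ T T' t x y HT HT' Hne HTT.
  destruct (@first_exit (fun j => fst (fH (ex j) p) = t0)
              (fun j => Nat.eq_dec _ _) T T') as (j & Hj & Hjt & Hjt');
    [lia | rewrite HT; reflexivity | rewrite HT'; simpl; exact Hne |].
  exists j; split; [lia|]. exists j; split; [lia|].
  pose proof (execution_slot_time_change_done Hex j p) as Hdone.
  destruct (fH (ex j) p) as [a r]; simpl in *; subst a.
  exists r; split; [reflexivity|]. apply Hdone; congruence.
Qed.
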